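(* Let $F$ be a Ferrers diagram with at least two rows, let $k$ be the length of the first row of $F$ and $\ell$ the length of the second row. Then the divisor $D_{k+1,1}$ on $R(F)$ has positive rank if and only if $(\ell,k-\ell+1)\in F$.
   Context: $\mathbb{N}=\{1,2,3,\dots\}$. A Ferrers diagram is a finite subset $F\subset\mathbb{N}^2$ such that whenever $(x,y)\in F$, either $x=1$ or $(x-1,y)\in F$, and either $y=1$ or $(x,y-1)\in F$; $x$ is the column index and $y$ the row index (row $y$ is $\{(x',y)\in F\}$, and its length is its cardinality). The Ferrers rook graph $R(F)$ is the simple graph with vertex set $F$ in which distinct $(x,y),(x',y')$ are adjacent iff $x=x'$ or $y=y'$. For $(x,y)\in\mathbb{N}^2$, $D_{x,y}=\sum_{(x',y')\in F,\ x'\neq x,\ y'\neq y}(x',y')$. Divisors on a graph: functions $D:V\to\mathbb{Z}$; firing a vertex $v$ means $v$ loses $\deg(v)$ chips and each neighbor gains one; divisors are equivalent if related by a sequence of firings; $\vert D\vert$ is the set of effective (nonnegative) divisors equivalent to $D$; $D$ has positive rank if for every vertex $v$ some $D'\in\vert D\vert$ has $D'(v)>0$. *)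

From HB Require Import structures.
From mathcomp Require Import all_boot all_order all_algebra finmap.
From Stdlib Require Import Relations.
Set Implicit Arguments. Unset Strict Implicit. Unset Printing Implicit Defensive.
Import Order.TTheory GRing.Theory Num.Theory.
Local Open Scope fset_scope.
Local Open Scope ring_scope.

(* A cell is (x, y) with x the column index and y the row index; N = {1,2,...}. *)
Definition ferrers (F : {fset nat * nat}) : Prop :=
  forall p, p \in F ->
    [/\ (1 <= p.1)%N, (1 <= p.2)%N,
        p.1 = 1%N \/ (p.1.-1, p.2) \in F
      & p.2 = 1%N \/ (p.1, p.2.-1) \in F].

Definition row_length (F : {fset nat * nat}) (y : nat) : nat :=
  #|` [fset p in F | p.2 == y]|.

Definition num_rows (F : {fset nat * nat}) : nat :=
  #|` [fset p.2 | p in F]|.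

Definition rook_adj (F : {fset nat * nat}) (v w : F) : bool :=
  (v != w) && (((val v).1 == (val w).1) || ((val v).2 == (val w).2)).

Definition rook_deg (F : {fset nat * nat}) (v : F) : nat :=
  #|[set w : F | rook_adj v w]|.

Definition divisor (F : {fset nat * nat}) := F -> int.

Definition fire (F : {fset nat * nat}) (v : F) (D : divisor F) : divisor F :=
  fun w => if w == v then D w - (rook_deg v)%:Z
           else if rook_adj v w then D w + 1 else D w.

Definition fire_step (F : {fset nat * nat}) (D D' : divisor F) : Prop :=
  exists v : F, D' = fire v D.

Definition div_equiv (F : {fset nat * nat}) : relation (divisor F) :=
  clos_refl_sym_trans (divisor F) (@fire_step F).

Definition effective (F : {fset nat * nat}) (D : divisor F) : Prop :=
  forall v : F, 0 <= D v.

Definition positive_rank (F : {fset nat * nat}) (D : divisor F) : Prop :=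
  forall v : F, exists D' : divisor F, [/\ div_equiv D D', effective D' & 0 < D' v].

Definition Dxy (F : {fset nat * nat}) (x y : nat) : divisor F :=
  fun v => if ((val v).1 != x) && ((val v).2 != y) then 1 else 0.

From mathcomp Require Import all_boot all_order all_algebra finmap.
From mathcomp Require Import zify lra.
From Stdlib Require Import Relations FunctionalExtensionality.
Set Implicit Arguments. Unset Strict Implicit. Unset Printing Implicit Defensive.
Import Order.TTheory GRing.Theory Num.Theory.
Local Open Scope fset_scope.

(* Since the first row has length k, column k+1 is empty and D_{k+1,1} is the
   indicator of the cells above the first row. Firing all of them gives an
   equivalent divisor E that vanishes above the first row and puts
   (height of column x) - 1 chips on (x,1). If (l, k-l+1) is a cell, E already
   has a chip on (x,1) for x <= l, and firing the first l columns of E moves a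
   chip to (x,1) for x > l, each (a,1) with a <= l having at least k-l chips to
   give. Otherwise E is reduced with respect to (k,1) in Dhar's sense while
   E(k,1) = 0, so no effective divisor equivalent to D has a chip on (k,1). *)

Section Laplacian.
Local Open Scope ring_scope.
Variables (T : finType) (adj : rel T).

Definition lap (f : T -> int) (w : T) : int := \sum_(u | adj w u) (f w - f u).

Definition deg_in (A : {set T}) (w : T) : nat := #|[set u | adj w u & u \in A]|.

Definition ind (A : {set T}) (u : T) : int := if u \in A then 1 else 0.

Lemma lapD f g w : lap (fun u => f u + g u) w = lap f w + lap g w.
Proof. by rewrite /lap -big_split; apply: eq_bigr => u _ /=; rewrite opprD addrACA. Qed.

Lemma lapN f w : lap (fun u => - f u) w = - lap f w.
Proof. by rewrite /lap -sumrN; apply: eq_bigr => u _; lra. Qed.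

Lemma lap0 w : lap (fun _ => 0) w = 0.
Proof. by rewrite /lap big1 // => u _; rewrite subrr. Qed.

Lemma ind_setU1 (A : {set T}) (v u : T) :
  v \notin A -> ind (v |: A) u = ind A u + ind [set v] u.
Proof.
by rewrite /ind !inE; case: eqP => [->|_] /= vA; rewrite ?(negbTE vA) ?addr0.
Qed.

Lemma sum_ind_deg_in A w : \sum_(u | adj w u) ind A u = (deg_in A w)%:Z.
Proof.
rewrite /deg_in -big_mkcondr -natz -sumr_const.
by apply: eq_bigl => u; rewrite inE.
Qed.

Lemma lap_ind A w :
  lap (ind A) w = if w \in A then (deg_in (~: A) w)%:Z else - (deg_in A w)%:Z.
Proof.
rewrite /lap -!sum_ind_deg_in -sumrN /ind; case: ifP => wA.
  by apply: eq_bigr => u _; rewrite inE; case: (u \in A).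
by apply: eq_bigr => u _; case: (u \in A).
Qed.

Lemma deg_in_le_lap g w : (forall u, g u <= g w) ->
  (deg_in [set u | g u != g w] w)%:Z <= lap g w.
Proof.
move=> g_max; rewrite -sum_ind_deg_in /lap; apply: ler_sum => u _.
rewrite /ind inE; have := g_max u; case: eqP => [->|/eqP ne] /=; first by rewrite subrr.
move=> le_ugw; have lt_ugw : g u < g w by rewrite lt_neqAle ne.
lia.
Qed.

(* Dhar's criterion for [E] to be [v]-reduced (effectiveness of [E] away from
   [v] is not part of it). *)
Definition reduced (E : T -> int) (v : T) : Prop :=
  forall A : {set T}, v \notin A -> A != set0 ->
    exists2 w, w \in A & E w < (deg_in (~: A) w)%:Z.

Lemma reduced_lap_ge0 E v g : reduced E v ->
  (forall w, 0 <= E w - lap g w) -> 0 <= lap g v.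
Proof.
move=> Ered Eeff; have [m _ m_max] := @arg_maxP _ _ T v xpredT g isT.
pose A := [set u | g u == g m].
have degA w : w \in A -> (deg_in (~: A) w)%:Z <= lap g w.
  rewrite inE => /eqP gw; rewrite (_ : ~: A = [set u | g u != g w]).
    by apply: deg_in_le_lap => u; rewrite gw; exact: m_max.
  by apply/setP => u; rewrite !inE gw.
case vA: (v \in A); first exact: le_trans (degA v vA).
have [||w wA ltw] := Ered A.
- by rewrite vA.
- by apply/set0Pn; exists m; rewrite inE.
by have := degA w wA; have := Eeff w; lra.
Qed.

End Laplacian.

Section Firing.
Local Open Scope ring_scope.
Variable F : {fset nat * nat}.
Local Notation lapR := (lap (@rook_adj F)).

Lemma rook_adjE (v w : F) : rook_adj v w =
  (val v != val w) && (((val v).1 == (val w).1) || ((val v).2 == (val w).2)).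
Proof. by []. Qed.

Lemma rook_adjC (v w : F) : rook_adj v w = rook_adj w v.
Proof. by rewrite /rook_adj eq_sym [(val w).1 == _]eq_sym [(val w).2 == _]eq_sym. Qed.

Lemma rook_adj_irr (v : F) : rook_adj v v = false.
Proof. by rewrite /rook_adj eqxx. Qed.

Lemma fire_lap v (D : divisor F) w : fire v D w = D w - lapR (ind [set v]) w.
Proof.
rewrite lap_ind inE /fire /deg_in; case: eqP => [->|_].
  congr (_ - _%:Z); apply: eq_card => u; rewrite !inE.
  by case: eqP => [->|]; rewrite ?rook_adj_irr ?andbT.
rewrite (_ : [set u | _ & _] = if rook_adj v w then [set v] else set0).
  by case: ifP; rewrite ?cards1 ?cards0 opprK ?subr0.
apply/setP => u; rewrite [u \in [set _ | _]]inE in_set1.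
case: eqP => [->|/eqP uv]; last by case: ifP; rewrite ?inE ?(negbTE uv) andbF.
by rewrite andbT [rook_adj w v]rook_adjC; case: (rook_adj v w); rewrite !inE ?eqxx.
Qed.

Lemma div_equiv_fire_set (D : divisor F) (A : {set F}) :
  div_equiv D (fun w => D w - lapR (ind A) w).
Proof.
rewrite -(set_enum A); elim: (enum A) => [|v s IH].
  rewrite (_ : ind _ = fun _ => 0); last first.
    by apply: functional_extensionality => u; rewrite /ind inE.
  rewrite (_ : (fun w => _) = D); first exact: rst_refl.
  by apply: functional_extensionality => w; rewrite lap0 subr0.
have -> : [set x in v :: s] = v |: [set:: s] by exact: set_cons.
case: (boolP (v \in [set:: s])) => vs.
  by rewrite (setUidPr _) ?sub1set.
apply: (rst_trans _ _ _ _ _ IH); apply: rst_step; exists v.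
apply: functional_extensionality => w; rewrite fire_lap.
rewrite (_ : ind _ = fun u => ind [set:: s] u + ind [set v] u).
  by rewrite lapD opprD addrA.
by apply: functional_extensionality => u; rewrite ind_setU1.
Qed.

Lemma div_equiv_lap (D D' : divisor F) :
  div_equiv D D' -> exists f, forall w, D' w = D w - lapR f w.
Proof.
elim=> {D D'} [D D' [v ->] | D | D D' _ [f eqD'] | D1 D2 D3 _ [f eq2] _ [g eq3]].
- by exists (ind [set v]) => w; rewrite fire_lap.
- by exists (fun _ => 0) => w; rewrite lap0 subr0.
- by exists (fun u => - f u) => w; rewrite lapN eqD'; lra.
- by exists (fun u => f u + g u) => w; rewrite eq3 eq2 lapD; lra.
Qed.

End Firing.

Section Cells.
Variable F : {fset nat * nat}.

Definition cells (P : pred (nat * nat)) : {set F} := [set u | P (val u)].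

Lemma card_cells_le (P : pred (nat * nat)) (s : seq (nat * nat)) :
  (forall p, p \in F -> P p -> p \in s) -> #|cells P| <= size s.
Proof.
move=> sub; rewrite cardE -(size_map val); apply: uniq_leq_size.
  by rewrite map_inj_uniq ?enum_uniq //; exact: val_inj.
by move=> p /mapP[u]; rewrite mem_enum inE => Pu ->; exact: sub (fsvalP u) Pu.
Qed.

Lemma card_cells_ge (P : pred (nat * nat)) (s : seq (nat * nat)) :
  uniq s -> (forall p, p \in s -> (p \in F) && P p) -> size s <= #|cells P|.
Proof.
move=> s_uniq sub; rewrite cardE -(size_map val).
apply: uniq_leq_size => // p /sub/andP[Fp Pp].
by apply/mapP; exists [` Fp]; rewrite ?mem_enum ?inE.
Qed.

End Cells.

Section Ferrers.
Variable F : {fset nat * nat}.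
Hypothesis HF : ferrers F.

Lemma ferrers_gt0 p : p \in F -> 0 < p.1 /\ 0 < p.2.
Proof. by case/HF. Qed.

Lemma ferrers_left p x : p \in F -> 0 < x <= p.1 -> (x, p.2) \in F.
Proof.
case: p => x0 y /= + /andP[x_gt0]; elim: x0 => [|x0 IH] Fp.
  by rewrite leqn0 => /eqP x0; rewrite x0 in x_gt0.
rewrite leq_eqVlt => /orP[/eqP-> // | lt_x]; apply: IH; last by [].
by have [_ _ [/= x00 | //] _] := HF Fp; move: lt_x x_gt0; rewrite x00; lia.
Qed.

Lemma ferrers_down p y : p \in F -> 0 < y <= p.2 -> (p.1, y) \in F.
Proof.
case: p => x y0 /= + /andP[y_gt0]; elim: y0 => [|y0 IH] Fp.
  by rewrite leqn0 => /eqP y0; rewrite y0 in y_gt0.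
rewrite leq_eqVlt => /orP[/eqP-> // | lt_y]; apply: IH; last by [].
by have [_ _ _ [/= y00 | //]] := HF Fp; move: lt_y y_gt0; rewrite y00; lia.
Qed.

Lemma mem_ferrers x y : ((x, y) \in F) = (0 < x <= row_length F y).
Proof.
rewrite /row_length; apply/idP/andP => [Fxy | [x_gt0 le_x]].
  split; first by have [] := ferrers_gt0 Fxy.
  rewrite -[x](size_iota 1) -(size_map (pair^~ y)); apply: uniq_leq_size.
    by rewrite map_inj_uniq ?iota_uniq // => i j [].
  move=> p /mapP[i]; rewrite mem_iota => lt_i ->; rewrite !inE /= eqxx andbT.
  by apply: (ferrers_left Fxy) => /=; lia.
apply/negPn/negP => notFxy; move: le_x; apply/negP; rewrite -ltnNge.
have : #|` [fset p in F | p.2 == y]| <= size (map (pair^~ y) (iota 1 x.-1)).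
  apply: uniq_leq_size; first exact: fset_uniq.
  move=> [a b]; rewrite !inE /= => /andP[Fab /eqP eq_b]; subst b.
  have a_gt0 : 0 < a := (ferrers_gt0 Fab).1.
  have lt_ax : a < x.
    by rewrite ltnNge; apply: contra notFxy => le_xa; apply: (ferrers_left Fab) => /=; lia.
  by apply/mapP; exists a => //; rewrite mem_iota; lia.
by rewrite size_map size_iota; lia.
Qed.

End Ferrers.

Section TwoRows.
Variable F : {fset nat * nat}.
Hypotheses (HF : ferrers F) (two_rows : 1 < num_rows F).
Local Notation k := (row_length F 1).
Local Notation l := (row_length F 2).

Lemma ferrers_col_le p : p \in F -> p.1 <= k.
Proof.
case: p => x y Fxy /=; have [/= x_gt0 y_gt0] := ferrers_gt0 HF Fxy.
have : (x, 1) \in F by apply: (ferrers_down HF Fxy); rewrite y_gt0.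
by rewrite (mem_ferrers HF) => /andP[].
Qed.

Lemma ferrers_upper_col_le p : p \in F -> 1 < p.2 -> p.1 <= l.
Proof.
case: p => x y Fxy /= y_gt1.
have : (x, 2) \in F by apply: (ferrers_down HF Fxy); rewrite y_gt1.
by rewrite (mem_ferrers HF) => /andP[].
Qed.

Lemma row2_length_gt0 : 0 < l.
Proof.
have [p Fp p2] : exists2 p, p \in F & 1 < p.2.
  apply/(@hasP _ _ (enum_fset F)); move: two_rows; apply: contraLR => /hasPn all_row1.
  rewrite -leqNgt; apply: (@uniq_leq_size _ _ [:: 1]); first exact: fset_uniq.
  move=> _ /imfsetP[q /= Fq ->]; rewrite inE eqn_leq (ferrers_gt0 HF Fq).2 andbT.
  by rewrite leqNgt all_row1.
by have := ferrers_upper_col_le Fp p2; have := (ferrers_gt0 HF Fp).1; lia.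
Qed.

Lemma row2_length_le : l <= k.
Proof.
have : (l, 2) \in F by rewrite (mem_ferrers HF) row2_length_gt0 /=.
exact: ferrers_col_le.
Qed.

Local Open Scope ring_scope.
Local Notation lapR := (lap (@rook_adj F)).

Definition upper : {set F} := cells F [pred p | (1 < p.2)%N].
Definition col_above (x : nat) : {set F} := cells F [pred p | (p.1 == x) && (1 < p.2)%N].
Definition row1_tail : {set F} := cells F [pred p | (p.2 == 1)%N && (l < p.1)%N].
Definition left_part : {set F} := cells F [pred p | (p.1 <= l)%N].

Lemma mem_l1 : (l, 1%N) \in F.
Proof. by rewrite (mem_ferrers HF) row2_length_gt0 row2_length_le. Qed.

Lemma mem_k1 : (k, 1%N) \in F.
Proof. by rewrite (mem_ferrers HF) leqnn andbT (leq_trans row2_length_gt0 row2_length_le). Qed.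

Definition cell_l1 : F := [` mem_l1].
Definition cell_k1 : F := [` mem_k1].

Definition fired_upper : divisor F := fun w => ind upper w - lapR (ind upper) w.

Lemma notin_upper w : (w \notin upper) = ((val w).2 == 1)%N.
Proof. by rewrite inE -leqNgt eqn_leq (ferrers_gt0 HF (fsvalP w)).2 andbT. Qed.

Lemma Dxy_row1_end : @Dxy F k.+1 1 = ind upper.
Proof.
apply: functional_extensionality => w; rewrite /Dxy /ind -[w \in upper]negbK notin_upper.
by rewrite ltn_eqF // ltnS ferrers_col_le ?fsvalP.
Qed.

Lemma fired_upper_upper w : w \in upper -> fired_upper w = 0.
Proof.
move=> wU; rewrite /fired_upper lap_ind /ind wU.
suff -> : deg_in (@rook_adj F) (~: upper) w = 1%N by rewrite subrr.
move: w wU => [[x y] Fxy]; rewrite inE /= => y_gt1.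
have Fx1 : (x, 1%N) \in F by apply: (ferrers_down HF Fxy); rewrite /= ltnW.
rewrite /deg_in (_ : [set u | _ & _] = [set [` Fx1]]) ?cards1 //; apply/setP => -[[a b] Fab].
rewrite [_ \in [set _ | _]]inE in_setC notin_upper in_set1 -val_eqE rook_adjE /=.
by rewrite !xpair_eqE; apply/idP/idP; lia.
Qed.

Lemma fired_upper_row1 w :
  w \notin upper -> fired_upper w = (#|col_above (val w).1|)%:Z.
Proof.
move=> wU; rewrite /fired_upper lap_ind /ind (negbTE wU) sub0r opprK /deg_in.
congr (_%:Z); apply: eq_card => u; move: wU; rewrite notin_upper !inE rook_adjE /=.
by case: (fsval w) (fsval u) => [x y] [a b] /=; rewrite xpair_eqE => /eqP->; apply/idP/idP; lia.
Qed.

Lemma fired_upper_ge0 w : 0 <= fired_upper w.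
Proof.
by case: (boolP (w \in upper)) => [/fired_upper_upper | /fired_upper_row1] ->.
Qed.

Lemma card_col_above_ge x h : (x, h.+1) \in F -> (h <= #|col_above x|)%N.
Proof.
move=> Fxh; rewrite -[h](size_iota 0) -(size_map (fun i => (x, i.+2))).
apply: card_cells_ge => [|p /mapP[i]]; first by rewrite map_inj_uniq ?iota_uniq // => i j [].
rewrite mem_iota => lt_i ->; rewrite /= eqxx andTb; apply/andP; split; last by [].
by apply: (ferrers_down HF Fxh) => /=; lia.
Qed.

Lemma card_col_above_le x h : (x, h.+1) \notin F -> (#|col_above x| <= h.-1)%N.
Proof.
move=> notFxh; rewrite -[h.-1](size_iota 0) -(size_map (fun i => (x, i.+2))).
apply: card_cells_le => -[a b] Fab /andP[/eqP /= ax b_gt1]; subst a.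
have le_bh : (b <= h)%N.
  rewrite leqNgt; apply: contra notFxh => lt_hb.
  by apply: (ferrers_down HF Fab) => /=; lia.
by apply/mapP; exists (b - 2)%N; rewrite ?mem_iota; [lia | congr pair; lia].
Qed.

Lemma card_row1_tail : #|row1_tail| = (k - l)%N.
Proof.
have tailE p : p \in [seq (l + i.+1, 1)%N | i <- iota 0 (k - l)] =
    (p \in F) && (p.2 == 1)%N && (l < p.1)%N.
  case: p => a b; rewrite (mem_ferrers HF) /=.
  apply/mapP/idP => [[i] | /andP[/andP[range /eqP b1] lt_la]].
    by rewrite mem_iota => lt_i [-> ->] /=; have := row2_length_le; lia.
  by subst b; exists (a - l).-1; rewrite ?mem_iota; [lia | congr pair; lia].
apply/eqP; rewrite eqn_leq -[(k - l)%N](size_iota 0) -(size_map (fun i => (l + i.+1, 1)%N)).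
apply/andP; split.
  by apply: card_cells_le => p Fp Pp; rewrite tailE Fp.
apply: card_cells_ge => [|p]; last by rewrite tailE -andbA.
by rewrite map_inj_uniq ?iota_uniq // => i j [] /eqP; rewrite eqn_add2l => /eqP [].
Qed.

Lemma fired_upper_gt0 w : w \notin upper -> w \in left_part -> 0 < fired_upper w.
Proof.
move=> wU; rewrite inE /= => le_l; rewrite fired_upper_row1 //.
suff : (1 <= #|col_above (val w).1|)%N by lia.
by apply: card_col_above_ge; rewrite (mem_ferrers HF) le_l (ferrers_gt0 HF (fsvalP w)).1.
Qed.

Lemma lap_left_part_upper w :
  w \in upper -> w \in left_part -> lapR (ind left_part) w = 0.
Proof.
move=> wU wL; rewrite lap_ind wL /deg_in (_ : [set u | _ & _] = set0) ?cards0 //.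
apply/setP => u; rewrite !inE rook_adjE; move: wU wL; rewrite !inE.
have := ferrers_upper_col_le (fsvalP u).
case: w u => [[x y] ?] [[a b] ?] /=; rewrite xpair_eqE => ? ? ?; apply/negP; lia.
Qed.

Lemma lap_left_part_row1 w :
  w \notin upper -> w \in left_part -> lapR (ind left_part) w <= (k - l)%:Z.
Proof.
move=> wU wL; rewrite lap_ind wL lez_nat -card_row1_tail; apply: subset_leq_card.
apply/subsetP => u; rewrite !inE rook_adjE; move: wU wL; rewrite notin_upper !inE.
by case: w u => [[x y] ?] [[a b] ?] /=; rewrite xpair_eqE; lia.
Qed.

Lemma deg_left_part_gt0 w : w \notin upper -> w \notin left_part ->
  (0 < deg_in (@rook_adj F) left_part w)%N.
Proof.
move=> wU wL; rewrite card_gt0; apply/set0Pn; exists cell_l1; rewrite !inE rook_adjE /=.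
by move: wU wL; rewrite notin_upper !inE; case: w => [[x y] ?] /=; rewrite xpair_eqE; lia.
Qed.

Section Corner.
Hypothesis corner : (l, (k - l + 1)%N) \in F.

Lemma fired_upper_ge_corner w :
  w \notin upper -> w \in left_part -> (k - l)%:Z <= fired_upper w.
Proof.
move=> wU; rewrite inE /= => le_l; rewrite fired_upper_row1 // lez_nat.
apply: card_col_above_ge; rewrite -addn1.
by apply: (ferrers_left HF corner) => /=; rewrite le_l (ferrers_gt0 HF (fsvalP w)).1.
Qed.

Lemma positive_rank_upper : positive_rank (ind upper).
Proof.
move=> v; have [vU | vU] := boolP (v \in upper).
  exists (ind upper); split; first exact: rst_refl.
    by move=> w; rewrite /ind; case: ifP.
  by rewrite /ind vU.
have [vL | vL] := boolP (v \in left_part).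
  exists fired_upper; split; [exact: div_equiv_fire_set | exact: fired_upper_ge0 |].
  exact: fired_upper_gt0.
exists (fun w => fired_upper w - lapR (ind left_part) w); split.
- exact: (rst_trans _ _ _ _ _ (div_equiv_fire_set _ _) (div_equiv_fire_set _ _)).
- move=> w; have [wL | wL] := boolP (w \in left_part); last first.
    by rewrite lap_ind (negbTE wL) opprK; have := fired_upper_ge0 w; lia.
  have [wU | wU] := boolP (w \in upper).
    by rewrite fired_upper_upper // lap_left_part_upper // subrr.
  rewrite subr_ge0.
  exact: le_trans (lap_left_part_row1 wU wL) (fired_upper_ge_corner wU wL).
- rewrite lap_ind (negbTE vL) opprK.
  by have := fired_upper_ge0 v; have := deg_left_part_gt0 vU vL; lia.
Qed.

End Corner.

Section NoCorner.
Hypothesis no_corner : (l, (k - l + 1)%N) \notin F.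

Lemma row2_length_lt : (l < k)%N.
Proof.
rewrite ltn_neqAle row2_length_le andbT; apply: contraNneq no_corner => lk.
by rewrite -lk subnn add0n mem_l1.
Qed.

Lemma fired_upper_row1_tail w : w \in row1_tail -> fired_upper w = 0.
Proof.
rewrite inE /= => /andP[/eqP w1 lt_lw]; rewrite fired_upper_row1 ?notin_upper ?w1 //.
suff : (#|col_above (val w).1| <= 0)%N by lia.
apply: (card_col_above_le (h := 1)); apply: contraL lt_lw => Fw2.
by rewrite -leqNgt (ferrers_upper_col_le Fw2).
Qed.

Lemma fired_upper_cell_l1 : fired_upper cell_l1 < (k - l)%:Z.
Proof.
rewrite fired_upper_row1 ?notin_upper //=.
have := card_col_above_le (x := l) (h := (k - l)%N); rewrite -[(k - l).+1]addn1 => /(_ no_corner).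
by move=> le_deg; rewrite ltz_nat (leq_ltn_trans le_deg) // ltn_predL subn_gt0 row2_length_lt.
Qed.

Section Burning.
Variable A : {set F}.
Hypotheses (k1_notin : cell_k1 \notin A)
  (A_stable : forall w, w \in A -> (deg_in (@rook_adj F) (~: A) w)%:Z <= fired_upper w).

Lemma stable_nbr_mem w u : w \in A -> fired_upper w = 0 -> rook_adj w u -> u \in A.
Proof.
move=> wA Ew wu; apply: contraT => uA.
have : (deg_in (@rook_adj F) (~: A) w <= 0)%N by have := A_stable wA; rewrite Ew; lia.
by rewrite leqn0 cards_eq0 => /eqP/setP/(_ u); rewrite !inE wu uA.
Qed.

Lemma stable_upper_mem w u : w \in A -> w \in upper ->
  ((val w).1 == (val u).1) || ((val w).2 == (val u).2) -> u \in A.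
Proof.
move=> wA wU line; case: (eqVneq w u) => [<- // | wu].
by apply: stable_nbr_mem wA (fired_upper_upper wU) _; rewrite rook_adjE val_eqE wu.
Qed.

Lemma row1_tail_notin w : w \in row1_tail -> w \notin A.
Proof.
move=> wT; apply/negP => wA; have /negP := k1_notin; apply.
case: (eqVneq w cell_k1) => [<- // | wk].
apply: stable_nbr_mem wA (fired_upper_row1_tail wT) _.
by move: wT; rewrite inE rook_adjE val_eqE wk => /andP[-> _]; rewrite orbT.
Qed.

Lemma cell_l1_notin : cell_l1 \notin A.
Proof.
apply/negP => lA; have := A_stable lA; apply/negP; rewrite -ltNge.
apply: lt_le_trans fired_upper_cell_l1 _; rewrite lez_nat -card_row1_tail.
apply: subset_leq_card; apply/subsetP => u uT.
rewrite !inE (row1_tail_notin uT) andbT rook_adjE /=; move: uT; rewrite inE.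
by case: u => [[a b] ?] /=; rewrite xpair_eqE; lia.
Qed.

Lemma upper_notin w : w \in upper -> w \notin A.
Proof.
(* An upper cell (a,y) of [A] would drag (a,2), (l,2) and then (l,1) into [A]. *)
move=> wU; apply/negP => wA; move/negP: cell_l1_notin; apply.
have Fw2 : ((val w).1, 2%N) \in F.
  by apply: (ferrers_down HF (fsvalP w)); move: wU; rewrite inE.
have Fl2 : (l, 2%N) \in F by rewrite (mem_ferrers HF) row2_length_gt0 leqnn.
have w2A : [` Fw2] \in A by apply: stable_upper_mem wA wU _; rewrite eqxx.
have l2A : [` Fl2] \in A by apply: stable_upper_mem w2A _ _; rewrite ?inE //= eqxx orbT.
by apply: stable_upper_mem l2A _ _; rewrite ?inE //= eqxx.
Qed.

Lemma row1_head_notin w : w \notin upper -> w \in left_part -> w \notin A.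
Proof.
(* More than [fired_upper w] edges leave [A] at [w]: to the column above [w] and to (k,1). *)
move=> wU wL; apply/negP => wA; have := A_stable wA; clear wA; apply/negP; rewrite -ltNge.
rewrite fired_upper_row1 // ltz_nat; apply: proper_card; apply/properP; split.
  apply/subsetP => u uC; have uU : u \in upper by move: uC; rewrite !inE => /andP[].
  rewrite [u \in [set _ | _]]inE in_setC (upper_notin uU) andbT.
  move: uC wU wL {uU}; rewrite inE notin_upper inE rook_adjE.
  by case: w u => [[x y] ?] [[a b] ?] /=; rewrite xpair_eqE; lia.
exists cell_k1; last by rewrite inE /= andbF.
rewrite !inE k1_notin andbT rook_adjE /=; move: wU wL; rewrite notin_upper inE.
by have := row2_length_lt; case: w => [[x y] ?] /=; rewrite xpair_eqE; lia.
Qed.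

Lemma stable_eq0 : A = set0.
Proof.
apply/setP => w; rewrite inE; apply/negbTE.
have [wU | wU] := boolP (w \in upper); first exact: upper_notin.
have [wL | wL] := boolP (w \in left_part); first exact: row1_head_notin.
by apply: row1_tail_notin; move: wU wL; rewrite notin_upper !inE /= -ltnNge => -> ->.
Qed.

End Burning.

Lemma fired_upper_reduced : reduced (@rook_adj F) fired_upper cell_k1.
Proof.
move=> A k1_notin A_ne; apply/exists_inP; apply: contraNT A_ne => /exists_inPn no_w.
apply/eqP.
by apply: stable_eq0 k1_notin _ => w /no_w; rewrite -leNgt.
Qed.

Lemma not_positive_rank_upper : ~ positive_rank (ind upper).
Proof.
move/(_ cell_k1) => [D' [eqD' D'_eff D'_pos]]; have [f D'E] := div_equiv_lap eqD'.
pose g u := f u - ind upper u.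
have D'g w : D' w = fired_upper w - lapR g w.
  by rewrite D'E /fired_upper (lapD _ f (fun u => - ind upper u)) lapN; lra.
have /(reduced_lap_ge0 fired_upper_reduced) : forall w, 0 <= fired_upper w - lapR g w.
  by move=> w; rewrite -D'g.
by move: D'_pos; rewrite D'g fired_upper_row1_tail ?inE ?eqxx ?row2_length_lt //; lra.
Qed.

End NoCorner.

End TwoRows.

Theorem proposition3p2 (F : {fset nat * nat}) :
  ferrers F -> (2 <= num_rows F)%N ->
  let k := row_length F 1 in
  let l := row_length F 2 in
  positive_rank (@Dxy F k.+1 1) <-> (l, (k - l + 1)%N) \in F.
Proof.
move=> HF two_rows k l; rewrite /k /l (Dxy_row1_end HF).
split=> [rank | corner]; last exact: positive_rank_upper.
by apply/negPn/negP => no_corner; exact: not_positive_rank_upper no_corner rank.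
Qed.
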